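(* Let $(M,d)$ be a complete metric space and $X\subseteq M$ compact. Assume that every $\mu\in P(X)$ admits a barycenter in $M$, that $conv(X)$ is compact, and that at least one variance maximizing $\mu\in P(X)$ has a unique barycenter. Let $R$ be the circumradius of $X$ and $y$ its circumcenter. Then $\max_{\mu\in P(X)}Var(\mu)=R^2$, and every variance maximizing $\mu$ gives full measure to $\partial B(y,R)=\{x\in M: d(x,y)=R\}$.
   Context: $P(\cdot)$ denotes Borel probability measures. $Var(\mu)=\inf_{y\in M}\int_X d^2(x,y)\,d\mu(x)$, a barycenter of $\mu$ is a point of $M$ attaining this infimum, and a variance maximizing measure is a maximizer of $Var$ over $P(X)$. $conv(X)$ is the set of all barycenters of measures in $P(X)$. The circumradius of $X$ is $R=\inf_{z\in M}\sup_{x\in X}d(x,z)$, and a circumcenter is a point $y\in M$ with $X\subseteq\bar B(y,R)$; under these hypotheses the circumcenter exists and is unique. *)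

From HB Require Import structures.
From mathcomp Require Import all_boot all_order all_algebra.
From mathcomp Require Import all_classical all_reals all_analysis.
Set Implicit Arguments. Unset Strict Implicit. Unset Printing Implicit Defensive.
Import Order.TTheory GRing.Theory Num.Theory.
Local Open Scope classical_set_scope.
Local Open Scope ring_scope.

(* A complete metric space: the join of the library's complete
   pseudometric structure (which includes a point and the completeness axiom
   "every proper Cauchy filter converges") with its metric structure. *)
#[short(type="completeMetricType")]
HB.structure Definition CompleteMetric (K : numDomainType) :=
  { M of CompletePseudoMetric K M & PseudoMetric_isMetric K M }.

Section defs.
Context {R : realType} (M : completeMetricType R).

Definition Borel := g_sigma_algebraType (@open M).

(* P(X): Borel probability measures on M giving full measure to X
   (identified with Borel probability measures on X, X compact hence closed) *)
Definition PX (X : set M) (mu : probability Borel R) : Prop :=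
  mu (~` X) = 0%E.

Definition cost (mu : probability Borel R) (y : M) : \bar R :=
  (\int[mu]_x ((mdist (x : M) y) ^+ 2)%:E)%E.

Definition Var (mu : probability Borel R) : \bar R :=
  ereal_inf [set cost mu y | y in [set: M]].

Definition barycenter (mu : probability Borel R) (y : M) : Prop :=
  cost mu y = Var mu.

Definition var_maximizing (X : set M) (mu : probability Borel R) : Prop :=
  PX X mu /\ forall nu, PX X nu -> (Var nu <= Var mu)%E.

(* conv(X): all barycenters of measures in P(X) *)
Definition bconv (X : set M) : set M :=
  [set y | exists mu, PX X mu /\ barycenter mu y].

Definition circumradius (X : set M) : R :=
  inf [set sup [set mdist x z | x in X] | z in [set: M]].

Definition circumcenter (X : set M) (y : M) : Prop :=
  X `<=` [set x | mdist x y <= circumradius X].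

End defs.

From HB Require Import structures.
From mathcomp Require Import all_boot all_order all_algebra.
From mathcomp Require Import all_classical all_reals all_analysis.
From mathcomp Require Import ring lra measurable_realfun.
Import Order.TTheory GRing.Theory Num.Theory numFieldNormedType.Exports.
Local Open Scope classical_set_scope.
Local Open Scope ring_scope.

(* Let mu be a variance maximizer with unique barycenter b and v = Var mu. For a in X
   and 0 < t <= 1, a barycenter z of the mixture (1 - t) mu + t delta_a satisfies
     (1 - t) int d(x,z)^2 dmu + t d(a,z)^2 = Var((1 - t) mu + t delta_a) <= v
                                           <= int d(x,z)^2 dmu,
   so d(a,z)^2 <= v and (1 - t) int d(x,z)^2 dmu <= v. These barycenters lie in the
   compact set conv(X), and since sublevel sets of z |-> int d(x,z)^2 dmu are closed,
   a cluster point as t -> 0 is a barycenter of mu, i.e. b. Hence X lies in the closed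
   ball of radius sqrt v around b and R^2 <= v, while Var nu <= int d(x,y)^2 dnu <= R^2
   for every nu in P(X). For a maximizer, int d(x,y)^2 dmu = R^2 with d(x,y) <= R on X
   then forces d(x,y) = R mu-almost everywhere. *)

Lemma ler_of_forall_divSn {R : realType} (c v C : R) :
  (forall k : nat, c <= v + C / k.+1%:R) -> c <= v.
Proof.
move=> cvC; apply/ler_addgt0Pr => e e0.
have C1 : 0 < `|C| + 1 by rewrite ltr_wpDl.
have [k] := ltr_add_invr (divr_gt0 e0 C1).
rewrite add0r ltr_pdivlMr // => ke.
apply: le_trans (cvC k) _; rewrite lerD2l.
set u := k.+1%:R^-1 in ke *.
have u0 : 0 < u by rewrite invr_gt0 ltr0Sn.
have : 0 <= (`|C| - C) * u by rewrite mulr_ge0 ?subr_ge0 ?ler_norm ?ltW.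
nra.
Qed.

Lemma ler_add_divSn_of_onem {R : realFieldType} (c v : R) (n : nat) :
  (1 - n.+2%:R^-1) * c <= v -> c <= v + v / n.+1%:R.
Proof.
have m0 : 0 < n.+1%:R :> R by rewrite ltr0Sn.
have onemK : (1 - n.+2%:R^-1) * (1 + n.+1%:R^-1) = 1 :> R.
  rewrite -[n.+2]addn1 natrD; field.
  by rewrite lt0r_neq0 ?ltr_wpDr // lt0r_neq0.
move=> /(ler_wpM2r (_ : 0 <= 1 + n.+1%:R^-1)).
rewrite mulrAC onemK mul1r mulrDr mulr1; apply.
by rewrite addr_ge0 // invr_ge0 ltW.
Qed.

Section metric.
Context {R : realType} {M : metricType R}.

Lemma mdist_lipschitz (a b y : M) : `|mdist y a - mdist y b| <= mdist a b.
Proof.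
have := metric_triangle y a b; have := metric_triangle y b a.
rewrite (metric_sym b a) ler_norml => *; apply/andP; split; lra.
Qed.

Lemma continuous_mdist (y : M) : continuous (mdist y).
Proof.
move=> a; apply/cvgrPdist_lt => e e0.
apply: filterS (nbhsx_ballx a e e0) => x; rewrite ballEmdist /=.
exact: le_lt_trans (mdist_lipschitz _ _ _).
Qed.

Lemma closed_mdist_sqr_le (a : M) (v : R) : closed [set z | mdist a z ^+ 2 <= v].
Proof.
apply: (@preimage_closed _ _ (fun z => mdist a z ^+ 2) _ _ (@closed_le _ v)).
move=> z _; exact: continuous_comp (continuous_mdist a z) (@exprn_continuous _ 2 _).
Qed.

End metric.

Section borel_measurability.
Context {R : realType} {M : completeMetricType R}.

Lemma continuous_Borel_measurable (f : M -> R) :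
  continuous f -> measurable_fun [set: Borel M] f.
Proof.
move=> cf; apply: (measurability _ (RGenOpens.measurableE R)).
move=> _ [_ [a [b ->] <-]]; rewrite setTI; apply: sub_sigma_algebra.
exact: (proj1 (continuousP _) cf) (interval_open _ _).
Qed.

Lemma measurable_mdist_sqr (y : M) :
  measurable_fun [set: Borel M] (fun x => (mdist x y ^+ 2)%:E).
Proof.
apply/measurable_EFinP; under eq_fun do rewrite metric_sym.
apply: continuous_Borel_measurable => x.
exact: continuous_comp (continuous_mdist y x) (@exprn_continuous _ 2 _).
Qed.

Lemma compact_Borel_measurable (X : set M) :
  compact X -> measurable (X : set (Borel M)).
Proof.
move=> /(compact_closed (@metric_hausdorff _ M)) /closed_openC oX.
by rewrite -[X]setCK; apply: measurableC; exact: sub_sigma_algebra.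
Qed.

End borel_measurability.

Section mixture.
Context d {T : measurableType d} {R : realType}.
Variables (P : probability T R) (a : T) (t : R).
Hypotheses (t0 : 0 <= t) (t1 : t <= 1).

Definition mixture : set T -> \bar R :=
  measure_add (mscale (NngNum (unstable.onem_ge0 t1)) P) (mscale (NngNum t0) \d_a).

Let mixture0 : mixture set0 = 0%E. Proof. exact: measure0. Qed.
Let mixture_ge0 A : (0 <= mixture A)%E. Proof. exact: measure_ge0. Qed.
Let mixture_sigma_additive : semi_sigma_additive mixture.
Proof. exact: measure_semi_sigma_additive. Qed.
HB.instance Definition _ := isMeasure.Build _ _ _ mixture
  mixture0 mixture_ge0 mixture_sigma_additive.

Let mixture_setT : mixture setT = 1%E.
Proof.
rewrite /mixture measure_addE /= /mscale /= probability_setT diracT.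
by rewrite !mule1 -EFinD subrK.
Qed.
HB.instance Definition _ := Measure_isProbability.Build _ _ _ mixture mixture_setT.

Lemma mixture_eq0 (A : set T) : P A = 0%E -> ~ A a -> mixture A = 0%E.
Proof.
move=> PA0 Aa; rewrite /mixture measure_addE /= /mscale /= PA0 diracE memNset //.
by rewrite !mule0 adde0.
Qed.

Lemma ge0_integral_mixture (f : T -> \bar R) :
  measurable_fun setT f -> (forall x, (0 <= f x)%E) ->
  (\int[mixture]_x f x = (1 - t)%:E * \int[P]_x f x + t%:E * f a)%E.
Proof.
move=> mf f0; rewrite ge0_integral_measure_add //.
by rewrite !ge0_integral_mscale // integral_dirac // diracT mul1e.
Qed.

End mixture.
Arguments mixture {d T R} P a {t} t0 t1.

Section cost.
Context {R : realType} {M : completeMetricType R}.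
Implicit Types (X : set M) (mu : probability (Borel M) R).
Local Open Scope ereal_scope.

Lemma cost_ge0 mu z : 0 <= cost mu z.
Proof. by apply: integral_ge0 => x _; rewrite lee_fin sqr_ge0. Qed.

Lemma Var_le_cost mu z : Var mu <= cost mu z.
Proof. by apply: ereal_inf_lbound; exists z. Qed.

Lemma Var_ge0 mu : 0 <= Var mu.
Proof. by apply: le_ereal_inf_tmp => _ [z _ <-]; exact: cost_ge0. Qed.

Lemma PX_ae {X mu} : compact X -> PX X mu -> {ae mu, forall x, X x}.
Proof.
move=> cX PXmu; exists (~` X); split => //.
by apply: measurableC; exact: compact_Borel_measurable.
Qed.

Lemma PX_nonempty {X mu} : PX X mu -> X !=set0.
Proof.
move=> PXmu; apply/set0P/eqP => X0; move: PXmu.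
by rewrite /PX X0 setC0 probability_setT => /eqP; rewrite eqe oner_eq0.
Qed.

Lemma cost_le_ae mu z (r : R) :
  {ae mu, forall x, (mdist x z <= r)%R} -> cost mu z <= (r ^+ 2)%:E.
Proof.
move=> dzr; have -> : (r ^+ 2)%:E = \int[mu]_x (cst (r ^+ 2)%:E) x.
  by rewrite integral_cst //= probability_setT mule1.
apply: ae_ge0_le_integral => //.
- by move=> x _; rewrite lee_fin sqr_ge0.
- exact: measurable_mdist_sqr.
- by move=> x _; rewrite lee_fin sqr_ge0.
apply: (@filterS (Borel M)) dzr => x dxz _.
by rewrite lee_fin ler_sqr ?nnegrE ?mdist_ge0 // (le_trans (mdist_ge0 _ _) dxz).
Qed.

Lemma cost_fin_num {X mu} {y : M} {r : R} z : compact X -> PX X mu ->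
  X `<=` [set x | (mdist x y <= r)%R] -> cost mu z \is a fin_num.
Proof.
move=> cX PXmu Xr; rewrite ge0_fin_numE ?cost_ge0 //.
apply: le_lt_trans (ltry ((r + mdist y z) ^+ 2)%R).
apply: cost_le_ae; apply: (@filterS (Borel M)) (PX_ae cX PXmu) => x /Xr /= dxy.
by rewrite (le_trans (metric_triangle _ y _)) // lerD2r.
Qed.

Lemma Var_fin_num {X mu} {y : M} {r : R} : compact X -> PX X mu ->
  X `<=` [set x | (mdist x y <= r)%R] -> Var mu \is a fin_num.
Proof.
move=> cX PXmu Xr; rewrite ge0_fin_numE ?Var_ge0 //.
apply: le_lt_trans (Var_le_cost mu y) _.
by rewrite -ge0_fin_numE ?cost_ge0 //; exact: cost_fin_num Xr.
Qed.

Lemma cost_mixture mu a t (t0 : (0 <= t)%R) (t1 : (t <= 1)%R) z :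
  cost (mixture mu a t0 t1) z = (1 - t)%:E * cost mu z + (t * mdist a z ^+ 2)%:E.
Proof.
rewrite /cost ge0_integral_mixture ?EFinM //; first exact: measurable_mdist_sqr.
by move=> x; rewrite lee_fin sqr_ge0.
Qed.

Lemma PX_mixture {X mu a t} (t0 : (0 <= t)%R) (t1 : (t <= 1)%R) :
  PX X mu -> X a -> PX X (mixture mu a t0 t1).
Proof. by move=> PXmu Xa; apply: mixture_eq0 => // /(_ Xa). Qed.

Lemma sqr_le_shift (D E e : R) : (0 <= D)%R -> (0 <= E)%R -> (0 <= e <= 1)%R ->
  (E <= D + e)%R -> (E ^+ 2 <= (1 + e) * D ^+ 2 + 2 * e)%R.
Proof.
move=> D0 E0 /andP[e0 e1] ED.
have : (E ^+ 2 <= (D + e) ^+ 2)%R by rewrite ler_sqr ?nnegrE //; lra.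
have := sqr_ge0 (D - 1); rewrite !expr2; nra.
Qed.

Lemma cost_le_shift mu z z' (e : R) : (0 <= e <= 1)%R -> (mdist z z' <= e)%R ->
  cost mu z' <= (1 + e)%:E * cost mu z + (2 * e)%:E.
Proof.
move=> e01 dzz'; have /andP[e0 _] := e01.
have -> : (1 + e)%:E * cost mu z + (2 * e)%:E =
    \int[mu]_x (((1 + e) * mdist x z ^+ 2)%:E + (2 * e)%:E).
  rewrite ge0_integralD //; last 3 first.
  - by move=> x _; rewrite lee_fin mulr_ge0 ?sqr_ge0 // addr_ge0.
  - apply/measurable_EFinP/measurable_funM => //.
    by apply/measurable_EFinP; exact: measurable_mdist_sqr.
  - by move=> x _; rewrite lee_fin mulr_ge0.
  rewrite integral_cst //= probability_setT mule1; congr (_ + _).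
  under eq_integral do rewrite EFinM.
  rewrite ge0_integralZl //; first exact: measurable_mdist_sqr.
  - by move=> x _; rewrite lee_fin sqr_ge0.
  - by rewrite lee_fin addr_ge0.
apply: ge0_le_integral => //.
- by move=> x _; rewrite lee_fin sqr_ge0.
- exact: measurable_mdist_sqr.
- apply/measurable_EFinP/measurable_funD => //.
  by apply/measurable_funM => //; apply/measurable_EFinP; exact: measurable_mdist_sqr.
move=> x _; rewrite -EFinD lee_fin sqr_le_shift ?mdist_ge0 //.
by rewrite (le_trans (metric_triangle _ z _)) // lerD2l.
Qed.

Lemma closed_cost_le mu (c : R) : closed [set z | cost mu z <= c%:E].
Proof.
move=> z clz; apply/lee_addgt0Pr => e e0.
pose d := (Num.min 1 (e / (`|c| + 2)))%R.
have d0 : (0 < d)%R by rewrite lt_min ltr01 divr_gt0 //; lra.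
have d1 : (d <= 1)%R by rewrite ge_min lexx.
have de : (d * (`|c| + 2) <= e)%R.
  by rewrite -ler_pdivlMr ?ge_min ?lexx ?orbT //; lra.
have [z' [/= cz' dzz']] := clz _ (nbhsx_ballx z d d0).
rewrite ballEmdist /= metric_sym in dzz'.
have fz' : cost mu z' \is a fin_num.
  by rewrite ge0_fin_numE ?cost_ge0 // (le_lt_trans cz' (ltry _)).
have w0 : (0 <= fine (cost mu z'))%R by rewrite -lee_fin fineK ?cost_ge0.
apply: le_trans (cost_le_shift mu z' z d _ (ltW dzz')) _; first by rewrite ltW.
move: cz'; rewrite -(fineK fz') -EFinM -EFinD !lee_fin => wc.
have := ler_norm c; nra.
Qed.

End cost.

Section probability_level_set.
Context d {T : measurableType d} {R : realType} (P : probability T R).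
Local Open Scope ereal_scope.

Lemma ae_probability1 (A : set T) : measurable A -> {ae P, forall x, A x} -> P A = 1.
Proof.
move=> mA [N [mN PN0 AN]].
have PAC0 : P (~` A) = 0.
  by apply: (subset_measure0 (measurableC mA) mN AN PN0).
by rewrite -[A]setCK probability_setC ?PAC0 ?sube0 //; exact: measurableC.
Qed.

Variables (f : T -> R) (c : R).
Hypotheses (mf : measurable_fun setT f) (f0 : forall x, (0 <= f x)%R) (c0 : (0 <= c)%R).
Hypotheses (fc : {ae P, forall x, (f x <= c)%R}) (cf : c%:E <= \int[P]_x (f x)%:E).

Lemma measure_sublevel_eq0 (e : R) : (0 < e)%R -> P [set x | (f x <= c - e)%R] = 0.
Proof.
move=> e0; set N := [set x | _].
have mN : measurable N.
  by rewrite /N -preimage_itvNyc -[X in measurable X]setTI; exact: mf.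
have mN1 : measurable_fun setT (fun x => (\1_N x : R)%:E).
  by apply/measurable_EFinP; exact: measurable_indic.
have mfN : measurable_fun setT (fun x => e%:E * (\1_N x)%:E).
  exact: measurable_funeM.
have fN_le : \int[P]_x ((f x)%:E + e%:E * (\1_N x)%:E) <= c%:E.
  have -> : c%:E = \int[P]_x (cst c%:E) x.
    by rewrite integral_cst //= (probability_setT P) mule1.
  apply: ae_ge0_le_integral => //.
  - by move=> x _; rewrite indicE -EFinM -EFinD lee_fin addr_ge0 // mulr_ge0 // ltW.
  - by apply: emeasurable_funD => //; exact/measurable_EFinP.
  apply: (@filterS T) fc => x fxc _; rewrite indicE -EFinM -EFinD lee_fin.
  case: (boolP (x \in N)) => [/set_mem Nx|_]; last by rewrite mulr0; lra.
  by rewrite mulr1; move: Nx; rewrite /N /=; lra.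
have : c%:E + e%:E * P N <= c%:E.
  apply: (le_trans _ fN_le); rewrite ge0_integralD //; last 3 first.
  - by move=> x _; rewrite lee_fin.
  - exact/measurable_EFinP.
  - by move=> x _; rewrite indicE -EFinM lee_fin mulr_ge0 // ltW.
  by rewrite ge0_integralZl ?integral_indic ?setIT ?leeD2r // lee_fin ltW.
rewrite -[leRHS]adde0 leeD2lE // pmule_rle0 ?lte_fin // => PN0.
by apply/le_anti/andP; split => //; exact: measure_ge0.
Qed.

Lemma probability_level_set1 : P [set x | f x = c] = 1.
Proof.
apply: ae_probability1.
  by have := mf measurableT _ (measurable_set1 c); rewrite setTI.
have gap n : {ae P, forall x, ~ (f x <= c - n.+1%:R^-1)%R}.
  exists [set x | (f x <= c - n.+1%:R^-1)%R]; split => //=.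
  - by rewrite -preimage_itvNyc -[X in measurable X]setTI; exact: mf.
  - by rewrite measure_sublevel_eq0 // invr_gt0.
  - by move=> x /= /contrapT.
apply: filterS2 fc (ae_foralln gap) => x fxc fxgap /=.
apply/eqP; rewrite eq_le fxc /=; apply: (@ler_of_forall_divSn _ _ _ 1) => n.
by move/negP: (fxgap n); rewrite -ltNge mul1r ltrBlDr => /ltW.
Qed.

End probability_level_set.

Lemma circumradius_le {R : realType} {M : completeMetricType R} {X : set M}
    (z : M) (r : R) :
  X !=set0 -> X `<=` [set x | mdist x z <= r] -> circumradius X <= r.
Proof.
move=> [x0 Xx0] Xr.
have ub w : has_ubound [set mdist x w | x in X].
  exists (r + mdist z w) => _ [x /Xr /= dxz <-].
  by rewrite (le_trans (metric_triangle _ z _)) // lerD2r.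
apply: (@le_trans _ _ (sup [set mdist x z | x in X])).
  apply: ge_inf; last by exists z.
  exists 0 => _ [w _ <-]; apply: le_trans (mdist_ge0 x0 w) _.
  by apply: (ub_le_sup (ub w)); exists x0.
apply: ge_sup; first by exists (mdist x0 z), x0.
by move=> _ [x /Xr dxz <-].
Qed.

Section variance_maximizer.
Context {R : realType} {M : completeMetricType R} {X : set M}.
Hypotheses (cX : compact X) (cconv : compact (bconv X)).
Hypothesis barycenter_ex :
  forall nu : probability (Borel M) R, PX X nu -> exists z, barycenter nu z.
Context {mu : probability (Borel M) R} {v : R} {y : M} {r : R}.
Hypotheses (mu_max : var_maximizing X mu) (Var_mu : Var mu = v%:E)
  (Xr : X `<=` [set x | mdist x y <= r]).

Let PXmu : PX X mu := mu_max.1.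

Let v_ge0 : 0 <= v. Proof. by rewrite -lee_fin -Var_mu Var_ge0. Qed.

Let cost_mu_fin z : cost mu z \is a fin_num. Proof. exact: cost_fin_num cX PXmu Xr. Qed.

Lemma mixture_barycenter_bound {a z : M} {t : R} (t0 : 0 < t) (t1 : t <= 1) :
  X a -> barycenter (mixture mu a (ltW t0) t1) z ->
  mdist a z ^+ 2 <= v /\ (1 - t) * fine (cost mu z) <= v.
Proof.
move=> Xa bz.
have vc : v <= fine (cost mu z) by rewrite -lee_fin fineK // -Var_mu Var_le_cost.
have cev : (1 - t) * fine (cost mu z) + t * mdist a z ^+ 2 <= v.
  rewrite -lee_fin EFinD EFinM fineK // -(cost_mixture mu a t (ltW t0) t1) bz -Var_mu.
  exact: mu_max.2 (PX_mixture _ _ PXmu Xa).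
have e0 := sqr_ge0 (mdist a z).
split; last by have := mulr_ge0 (ltW t0) e0; lra.
by rewrite -(ler_pM2l t0); nra.
Qed.

Lemma barycenter_mdist_sqr_le {b a : M} : (forall z, barycenter mu z -> b = z) ->
  X a -> mdist a b ^+ 2 <= v.
Proof.
move=> b_uniq Xa.
pose t n : R := n.+2%:R^-1.
have t_gt0 n : 0 < t n by rewrite invr_gt0.
have t_le1 n : t n <= 1 by rewrite invf_le1 // ler1n.
have [bs bsP] := choice (fun n =>
  barycenter_ex _ (PX_mixture (ltW (t_gt0 n)) (t_le1 n) PXmu Xa)).
pose K (n : nat) :=
  [set z | mdist a z ^+ 2 <= v /\ (cost mu z <= (v + v / n.+1%:R)%:E)%E].
have K_closed n : closed (K n).
  exact: closedI (closed_mdist_sqr_le a v) (closed_cost_le mu _).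
have bs_K n : K n (bs n).
  have [dabs cbs] := mixture_barycenter_bound (t_gt0 n) (t_le1 n) Xa (bsP n).
  split => //; rewrite -(fineK (cost_mu_fin _)) lee_fin.
  exact: ler_add_divSn_of_onem.
have K_mono m n : (n <= m)%N -> K m `<=` K n.
  move=> nm z [daz cz]; split => //; apply: le_trans cz _.
  by rewrite lee_fin lerD2l ler_wpM2l // lef_pV2 ?posrE ?ltr0Sn // ler_nat.
have bs_conv : (bs @ \oo) (bconv X).
  by exists 0%N => // n _; exists (mixture mu a (ltW (t_gt0 n)) (t_le1 n)); split;
    [exact: PX_mixture | exact: bsP].
have [b' [_ clb']] := cconv _ _ bs_conv.
have K_b' n : K n b'.
  rewrite (closure_id (K n)).1 //; move: clb'; rewrite clusterE; apply.
  by exists n => // m /= nm; exact: K_mono (bs_K m).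
have b'_bary : barycenter mu b'.
  apply/le_anti; rewrite Var_le_cost andbT Var_mu -(fineK (cost_mu_fin b')) lee_fin.
  apply: (@ler_of_forall_divSn _ _ _ v) => k.
  by rewrite -lee_fin fineK //; case: (K_b' k).
by rewrite (b_uniq _ b'_bary); case: (K_b' 0%N).
Qed.

Lemma circumradius_le_sqrt_Var {b : M} : (forall z, barycenter mu z -> b = z) ->
  circumradius X <= Num.sqrt v.
Proof.
move=> b_uniq; apply: (circumradius_le b _ (PX_nonempty PXmu)) => a Xa /=.
have := barycenter_mdist_sqr_le b_uniq Xa.
by rewrite -ler_sqrt // sqrtr_sqr ger0_norm ?mdist_ge0.
Qed.

End variance_maximizer.

Lemma Var_le_circumradius {R : realType} {M : completeMetricType R} {X : set M}
    {mu : probability (Borel M) R} {y : M} :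
  compact X -> PX X mu -> circumcenter X y ->
  (Var mu <= (circumradius X ^+ 2)%:E)%E.
Proof.
move=> cX PXmu cy; apply: le_trans (Var_le_cost mu y) _; apply: cost_le_ae.
exact: (@filterS (Borel M)) (PX_ae cX PXmu).
Qed.

Lemma circumcenter_sphere_full {R : realType} {M : completeMetricType R} {X : set M}
    {mu : probability (Borel M) R} {y : M} :
  compact X -> PX X mu -> circumcenter X y ->
  Var mu = (circumradius X ^+ 2)%:E ->
  mu [set x | mdist x y = circumradius X] = 1%E.
Proof.
move=> cX PXmu cy VR; set rho := circumradius X in cy VR *.
have [x0 Xx0] := PX_nonempty PXmu.
have rho0 : 0 <= rho := le_trans (mdist_ge0 x0 y) (cy x0 Xx0).
have -> : [set x | mdist x y = rho] = [set x | mdist x y ^+ 2 = rho ^+ 2].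
  apply/seteqP; split => x /=; first by move=> ->.
  by move/eqP; rewrite eqrXn2 ?mdist_ge0 // => /eqP.
apply: probability_level_set1.
- by apply/measurable_EFinP; exact: measurable_mdist_sqr.
- by move=> x; exact: sqr_ge0.
- exact: sqr_ge0.
- apply: (@filterS (Borel M)) (PX_ae cX PXmu) => x /cy /= dxy.
  by rewrite ler_sqr ?nnegrE ?mdist_ge0.
- by rewrite -VR; exact: Var_le_cost.
Qed.

Lemma Var_maximizer_eq {R : realType} {M : completeMetricType R} {X : set M}
    {mu : probability (Borel M) R} {b y : M} :
  compact X -> compact (bconv X) ->
  (forall nu : probability (Borel M) R, PX X nu -> exists z, barycenter nu z) ->
  var_maximizing X mu -> (forall z, barycenter mu z -> b = z) ->
  circumcenter X y -> Var mu = (circumradius X ^+ 2)%:E.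
Proof.
move=> cX cconv barycenter_ex mu_max b_uniq cy.
have Var_mu_fin := Var_fin_num cX mu_max.1 cy.
have v0 : 0 <= fine (Var mu) by rewrite -lee_fin fineK ?Var_ge0.
have [x0 Xx0] := PX_nonempty mu_max.1.
have rho0 : 0 <= circumradius X := le_trans (mdist_ge0 x0 y) (cy x0 Xx0).
apply/le_anti; rewrite (Var_le_circumradius cX mu_max.1 cy) /= -(fineK Var_mu_fin) lee_fin.
have := circumradius_le_sqrt_Var cX cconv barycenter_ex mu_max (esym (fineK Var_mu_fin))
  cy b_uniq.
by move=> rho_le; rewrite -(sqr_sqrtr v0) !expr2 ler_pM.
Qed.

Theorem corollary3p4 (R : realType) (M : completeMetricType R) (X : set M) :
  @compact M X ->
  (forall mu : probability (Borel M) R, PX X mu -> exists y, barycenter mu y) ->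
  @compact M (bconv X) ->
  (exists mu : probability (Borel M) R,
      var_maximizing X mu /\ exists! y, barycenter mu y) ->
  forall y : M, circumcenter X y ->
    (forall mu : probability (Borel M) R, PX X mu ->
       (Var mu <= ((circumradius X) ^+ 2)%:E)%E) /\
    (forall mu : probability (Borel M) R, var_maximizing X mu ->
       Var mu = ((circumradius X) ^+ 2)%:E /\
       mu [set x : M | mdist x y = circumradius X] = 1%E).
Proof.
move=> cX barycenter_ex cconv [mu [mu_max [b [_ b_uniq]]]] y cy.
have Var_mu := Var_maximizer_eq cX cconv barycenter_ex mu_max b_uniq cy.
split=> [nu PXnu|nu [PXnu nu_max]]; first exact: Var_le_circumradius cX PXnu cy.
have Var_nu : Var nu = (circumradius X ^+ 2)%:E.
  by apply/le_anti; rewrite (Var_le_circumradius cX PXnu cy) -Var_mu (nu_max _ mu_max.1).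
by split=> //; exact: circumcenter_sphere_full cX PXnu cy Var_nu.
Qed.
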